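(* Consider the system $\Sigma$: $x_{t+1}=f_u(x_t)$ with a finite control set $\mathcal{U}$, and let $\mathcal{X}\subseteq\mathbb{R}^n$ and $\Omega\subseteq\mathcal{X}$ be compact. Suppose $\varphi(\Omega)$ is $\delta$-robustly realizable for $\Sigma$, and that there exist $\rho>0$ and inclusion functions $[f_u]$ of $f_u$ ($u\in\mathcal{U}$) with $\mathrm{wid}([f_u]([x]))\le\rho\,\mathrm{wid}([x])$ for all boxes $[x]\subseteq\mathcal{X}$ and all $u\in\mathcal{U}$. For $\varepsilon>0$ let $Y^\varepsilon$ be the interval part of the output $K$ of Algorithm 3 run with inputs $\Omega,\mathcal{X},\{[f_u]\}_{u\in\mathcal{U}},\varepsilon$. Then Algorithm 3 terminates in finitely many steps, and if $\rho\varepsilon\le\delta$ then $$\mathrm{Win}^\delta_\Sigma(\varphi(\Omega))\subseteq Y^\varepsilon\subseteq\mathrm{Win}_\Sigma(\varphi(\Omega)).$$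
   Context: For $\delta\ge0$, $\Sigma^\delta$ has transitions $x_{t+1}=f_{u_t}(x_t)+d_t$, $u_t\in\mathcal{U}$, $|d_t|\le\delta$ ($|\cdot|$ infinity norm), $f_u$ continuous; $\Sigma=\Sigma^0$. A solution is an infinite sequence of states in $\mathcal{X}$ obeying these transitions. A solution satisfies $\varphi(\Omega)$ if it is in $\Omega$ from some time on. A memoryless strategy is $\kappa:\mathbb{R}^n\to2^{\mathcal{U}}$; a control sequence conforms to it if $u_k\in\kappa(x_k)$ for all $k$. $\mathrm{Win}^\delta_\Sigma(\varphi(\Omega))$ is the set of $x_0\in\mathcal{X}$ for which some memoryless $\kappa$ makes every solution of $\Sigma^\delta$ from $x_0$ with control conforming to $\kappa$ (and any disturbances) satisfy $\varphi(\Omega)$; $\mathrm{Win}_\Sigma=\mathrm{Win}^0_\Sigma$. $\varphi(\Omega)$ is $\delta$-robustly realizable if $\mathrm{Win}^\delta_\Sigma(\varphi(\Omega))\ne\emptyset$. $\mathrm{Pre}(Y)=\{x\in\mathcal{X}:\exists u,\ f_u(x)\in Y\}$. Boxes, width and inclusion functions: a box is a product of compact intervals, $\mathrm{wid}$ its maximal side length; $[f]$ is an inclusion function of $f$ if $f([x])\subseteq[f]([x])$ and $\mathrm{wid}([f]([x]))\to0$ as $\mathrm{wid}([x])\to0$. Sets are represented as finite unions (lists) of boxes. $\textsc{CPred}(\{[f_u]\},X,Y,\varepsilon)$: start with $K=\underline{X}=\Delta X=X_c=\emptyset$ and a list of the boxes of $X$; repeatedly remove a box $[x]$: if $[f_u]([x])\cap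 Y=\emptyset$ for all $u$, add it to $X_c$; else if $[f_u]([x])\subseteq Y$ for some $u$, add $[x]$ to $\underline{X}$ and $([x],u)$ to $K$; else if $\mathrm{wid}([x])<\varepsilon$ add it to $\Delta X$; else bisect it at the midpoint of a coordinate of maximal side length and put both halves in the list. Return $(K,\underline{X},\Delta X,X_c)$. Algorithm 3 (inputs $\Omega,\mathcal{X},\{[f_u]\},\varepsilon$): $K\leftarrow\emptyset$; $\widetilde{Y}\leftarrow\emptyset$, $Y\leftarrow\mathcal{X}$; $G_1\leftarrow\mathcal{X}\setminus\Omega$, $G_2\leftarrow\mathcal{X}\cap\Omega$. While $\widetilde{Y}\ne Y$: $Y\leftarrow\widetilde{Y}$; $(K_z,\underline{Z},\Delta Z,Z_c)\leftarrow\textsc{CPred}(\{[f_u]\},G_1,Y,\varepsilon)$; $K\leftarrow K\cup K_z$; $Z\leftarrow Y\cup\underline{Z}$; $X\leftarrow\emptyset$, $\widetilde{X}\leftarrow Z\cup G_2$, $V\leftarrow G_2$, $G_2\leftarrow\emptyset$; while $\widetilde{X}\ne X$: {$X\leftarrow\widetilde{X}$; $(K_v,\underline{V},\Delta V,V_c)\leftarrow\textsc{CPred}(\{[f_u]\},V,X,\varepsilon)$; $\widetilde{X}\leftarrow Z\cup\underline{V}$; $V\leftarrow\underline{V}$; $G_2\leftarrow G_2\cup\Delta V\cup V_c$}; $K\leftarrow K\cup K_v$; $\widetilde{Y}\leftarrow X$; $G_1\leftarrow\Delta Z\cup Z_c$. Return $K$. The interval part of $K$ is the union of all boxes $[x]$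 occurring in pairs $([x],u)\in K$. *)

From Stdlib Require Import Reals List.
From mathcomp Require Import all_boot.

Set Implicit Arguments.
Unset Strict Implicit.
Unset Printing Implicit Defensive.

Local Open Scope R_scope.

Definition pt (n : nat) := 'I_n -> R.
Definition box (n : nat) := (pt n * pt n)%type.
Definition pset (n : nat) := pt n -> Prop.

Definition valid_box {n} (b : box n) : Prop := forall i, fst b i <= snd b i.
Definition in_box {n} (b : box n) (x : pt n) : Prop :=
  forall i, fst b i <= x i <= snd b i.

Definition side {n} (b : box n) (i : 'I_n) : R := snd b i - fst b i.
Definition wid {n} (b : box n) : R :=
  List.fold_right Rmax 0 (List.map (side b) (enum 'I_n)).

Definition boxes_set {n} (l : list (box n)) : pset n :=
  fun x => exists b, List.In b l /\ in_box b x.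

Definition pset_sub {n} (A B : pset n) : Prop := forall x, A x -> B x.
Definition seteq {n} (A B : pset n) : Prop := forall x, A x <-> B x.

Definition continuous_map {n} (g : pt n -> pt n) : Prop :=
  forall x e, 0 < e -> exists eta, 0 < eta /\
    forall y, (forall i, Rabs (y i - x i) < eta) ->
      forall i, Rabs (g y i - g x i) < e.

Definition inclusion_function {n} (g : pt n -> pt n) (G : box n -> box n) : Prop :=
  (forall b, valid_box b -> forall x, in_box b x -> in_box (G b) (g x)) /\
  (forall e, 0 < e -> exists eta, 0 < eta /\
     forall b, valid_box b -> wid b < eta -> wid (G b) < e).

(* Winning set Win^delta of the reach-and-stay specification phi(Omega)
   for Sigma^delta : x_{t+1} = f_{u_t}(x_t) + d_t, |d_t|_inf <= delta. *)
Definition Win {n} {U : finType} (f : U -> pt n -> pt n) (X Om : pset n)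
    (delta : R) : pset n :=
  fun x0 => X x0 /\
    exists kappa : pt n -> U -> Prop,
      (forall x, exists u, kappa x u) /\
      forall (xs : nat -> pt n) (us : nat -> U) (ds : nat -> pt n),
        xs 0%nat = x0 ->
        (forall k, kappa (xs k) (us k) /\ (forall i, Rabs (ds k i) <= delta) /\
                   forall i, xs (S k) i = f (us k) (xs k) i + ds k i) ->
        (forall k, X (xs k)) /\
        exists N, forall k, (N <= k)%coq_nat -> Om (xs k).

Definition bisect {n} (sel : box n -> nat) (b : box n) : box n * box n :=
  let mid := fun i => (fst b i + snd b i) / 2 in
  ((fst b, fun j => if nat_of_ord j == sel b then mid j else snd b j),
   (fun j => if nat_of_ord j == sel b then mid j else fst b j, snd b)).

Definition sel_ok {n} (sel : box n -> nat) : Prop :=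
  forall b : box n, (0 < n)%N ->
    exists i : 'I_n, nat_of_ord i = sel b /\ forall j, side b j <= side b i.

Section Algo.
Context {n : nat} {U : finType}.
Variables (F : U -> box n -> box n) (eps : R) (sel : box n -> nat).

Definition disjoint_from (b : box n) (Y : pset n) : Prop :=
  forall x, in_box b x -> ~ Y x.
Definition box_sub (b : box n) (Y : pset n) : Prop :=
  forall x, in_box b x -> Y x.

(* CPred, big-step semantics: [cpred Y todo K Xl DX Xc K' Xl' DX' Xc'] means
   processing the list [todo] starting from accumulators (K,Xl,DX,Xc) ends
   with (K',Xl',DX',Xc'). *)
Inductive cpred (Y : pset n) :
  list (box n) -> list (box n * U) -> list (box n) -> list (box n) -> list (box n) ->
  list (box n * U) -> list (box n) -> list (box n) -> list (box n) -> Prop :=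
| cpred_done K Xl DX Xc : cpred Y nil K Xl DX Xc K Xl DX Xc
| cpred_out b rest K Xl DX Xc K' Xl' DX' Xc' :
    (forall u, disjoint_from (F u b) Y) ->
    cpred Y rest K Xl DX (b :: Xc) K' Xl' DX' Xc' ->
    cpred Y (b :: rest) K Xl DX Xc K' Xl' DX' Xc'
| cpred_in b u rest K Xl DX Xc K' Xl' DX' Xc' :
    ~ (forall v, disjoint_from (F v b) Y) ->
    box_sub (F u b) Y ->
    cpred Y rest ((b, u) :: K) (b :: Xl) DX Xc K' Xl' DX' Xc' ->
    cpred Y (b :: rest) K Xl DX Xc K' Xl' DX' Xc'
| cpred_small b rest K Xl DX Xc K' Xl' DX' Xc' :
    ~ (forall v, disjoint_from (F v b) Y) ->
    ~ (exists v, box_sub (F v b) Y) ->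
    wid b < eps ->
    cpred Y rest K Xl (b :: DX) Xc K' Xl' DX' Xc' ->
    cpred Y (b :: rest) K Xl DX Xc K' Xl' DX' Xc'
| cpred_split b rest K Xl DX Xc K' Xl' DX' Xc' :
    ~ (forall v, disjoint_from (F v b) Y) ->
    ~ (exists v, box_sub (F v b) Y) ->
    ~ (wid b < eps) ->
    cpred Y (fst (bisect sel b) :: snd (bisect sel b) :: rest) K Xl DX Xc K' Xl' DX' Xc' ->
    cpred Y (b :: rest) K Xl DX Xc K' Xl' DX' Xc'.

Definition CPred (Xin : list (box n)) (Y : list (box n))
    (K : list (box n * U)) (Xl DX Xc : list (box n)) : Prop :=
  cpred (boxes_set Y) Xin nil nil nil nil K Xl DX Xc.

(* Inner while-loop of Algorithm 3.  State: (X, Xtil, V, G2, Kv);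
   result: final (X, Kv, G2). *)
Inductive inner (Z : list (box n)) :
  list (box n) -> list (box n) -> list (box n) -> list (box n) -> list (box n * U) ->
  list (box n) -> list (box n * U) -> list (box n) -> Prop :=
| inner_stop X Xt V G2 Kv :
    seteq (boxes_set Xt) (boxes_set X) ->
    inner Z X Xt V G2 Kv X Kv G2
| inner_step X Xt V G2 Kv Kv' Vl DV Vc Xf Kvf G2f :
    ~ seteq (boxes_set Xt) (boxes_set X) ->
    CPred V Xt Kv' Vl DV Vc ->
    inner Z Xt (Z ++ Vl) Vl (G2 ++ DV ++ Vc) Kv' Xf Kvf G2f ->
    inner Z X Xt V G2 Kv Xf Kvf G2f.

(* Outer while-loop of Algorithm 3.  State: (K, Ytil, Y, G1, G2);
   result: the returned K. *)
Inductive outer :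
  list (box n * U) -> list (box n) -> pset n -> list (box n) -> list (box n) ->
  list (box n * U) -> Prop :=
| outer_stop K Yt Y G1 G2 :
    seteq (boxes_set Yt) Y -> outer K Yt Y G1 G2 K
| outer_step K Yt Y G1 G2 Kz Zl DZ Zc Xf Kv G2' Kf :
    ~ seteq (boxes_set Yt) Y ->
    CPred G1 Yt Kz Zl DZ Zc ->
    inner (Yt ++ Zl) nil ((Yt ++ Zl) ++ G2) G2 nil nil Xf Kv G2' ->
    outer ((K ++ Kz) ++ Kv) Xf (boxes_set Yt) (DZ ++ Zc) G2' Kf ->
    outer K Yt Y G1 G2 Kf.

(* Algorithm 3 with inputs Omega, X (as the initial box lists
   G1 = X \ Omega, G2 = X /\ Omega and the set X), {[f_u]}, eps: returns K. *)
Definition algorithm3 (X : pset n) (G1 G2 : list (box n)) (K : list (box n * U)) : Prop :=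
  outer nil nil X G1 G2 K.

End Algo.

Definition interval_part {n} {U : finType} (K : list (box n * U)) : pset n :=
  fun x => exists b u, List.In (b, u) K /\ in_box b x.

From Stdlib Require Import Reals List Lra Lia Classical ClassicalEpsilon FunctionalExtensionality.
From mathcomp Require Import all_boot zify.
Set Implicit Arguments.
Unset Strict Implicit.
Local Open Scope R_scope.

(* Termination: every box the algorithm handles arises from an initial box by
   bisecting boxes of width at least [eps] at the midpoint of a longest side, so
   all of them belong to one finite list [D]; each round of either loop changes
   monotonically and strictly which boxes of [D] lie in the current
   approximation.
   Soundness: the pairs added by the successive rounds form layers; a box of an
   outer-loop layer is mapped into the earlier layers, a box of an inner-loop
   layer lies in [Om] and is mapped into earlier layers or its own, so the union
   of the layers carries a memoryless strategy for [phi(Om)] in the undisturbed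
   system.
   Completeness: a rejected box is either mapped outside the target or has width
   below [eps], and then its enclosure has width at most [rho * eps <= delta], so
   a disturbance can send any of its points out of the target.  Along the loops
   this gives the disturbance a strategy that keeps the state outside [Y^eps] and,
   from a point of [Om], leaves [Om] within a bounded number of steps; against a
   winning controller this is impossible from [Win^delta]. *)

Section BoxGeometry.
Context {n : nat}.
Implicit Types (b : box n) (A B : list (box n)) (S : pset n).

Lemma side_le_wid b i : side b i <= wid b.
Proof.
rewrite /wid; have : i \in enum 'I_n by rewrite mem_enum.
elim: (enum 'I_n) => [//|j s IH]; rewrite inE => /orP[/eqP<- | /IH Hi] /=.
- exact: Rmax_l.
- exact: Rle_trans Hi (Rmax_r _ _).
Qed.

Lemma wid_le b c : 0 <= c -> (forall i, side b i <= c) -> wid b <= c.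
Proof. by move=> c0 Hc; rewrite /wid; elim: (enum 'I_n) => [|j s IH] /=; [|apply: Rmax_lub]. Qed.

Lemma boxes_set_app A B x : boxes_set (A ++ B) x <-> boxes_set A x \/ boxes_set B x.
Proof.
split=> [[b [Hb Hx]]|[[b [Hb Hx]]|[b [Hb Hx]]]].
- by case/in_app_iff: Hb => Hb'; [left|right]; exists b.
- by exists b; split=> //; apply: in_or_app; left.
- by exists b; split=> //; apply: in_or_app; right.
Qed.

Lemma boxes_set_incl A B : incl A B -> pset_sub (boxes_set A) (boxes_set B).
Proof. by move=> AB x [b [Hb Hx]]; exists b; split=> //; apply: AB. Qed.

Lemma boxes_set_nil x : ~ boxes_set (@nil (box n)) x.
Proof. by case=> b []. Qed.

Lemma boxes_set_cons b A x : boxes_set (b :: A) x <-> in_box b x \/ boxes_set A x.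
Proof.
split=> [[c [[<-|Hc] Hx]]|[Hx|[c [Hc Hx]]]].
- by left.
- by right; exists c.
- by exists b; split=> //; left.
- by exists c; split=> //; right.
Qed.

Lemma box_sub_boxes_set A b : In b A -> box_sub b (boxes_set A).
Proof. by move=> Hb x Hx; exists b. Qed.

Definition inside S b : Prop := valid_box b /\ box_sub b S.

Lemma inside_valid S b : inside S b -> valid_box b.
Proof. by case. Qed.

Lemma inside_sub S (S' : pset n) b : pset_sub S S' -> inside S b -> inside S' b.
Proof. by move=> SS' [V Sb]; split=> // x /Sb /SS'. Qed.

Lemma Forall_inside S A : (forall b, In b A -> valid_box b) -> pset_sub (boxes_set A) S ->
  Forall (inside S) A.
Proof.
move=> HV HS; apply/Forall_forall => b Hb; split; first exact: HV.
by move=> x Hx; apply: HS; exists b.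
Qed.

Lemma Forall_inside_self (P : box n -> Prop) A : (forall b, P b -> valid_box b) ->
  Forall P A -> Forall (fun b => P b /\ inside (boxes_set A) b) A.
Proof.
move=> PV /Forall_forall HA; apply/Forall_forall => b Hb.
by have Pb := HA b Hb; split=> //; split; [apply: PV|apply: box_sub_boxes_set].
Qed.

Lemma Forall_in_app_or (P : box n -> Prop) A B :
  Forall P B -> Forall (fun b => In b A \/ P b) (A ++ B).
Proof.
move=> HB; apply/Forall_app; split; last by apply: Forall_impl HB => b; right.
by apply/Forall_forall => b; left.
Qed.

Lemma not_seteq_witness (A B : pset n) : pset_sub A B -> ~ seteq A B -> exists x, B x /\ ~ A x.
Proof.
move=> AB nAB; apply: NNPP => Hno; apply: nAB => x; split=> [/AB //|Bx].
by apply: NNPP => nAx; apply: Hno; exists x.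
Qed.

Lemma interval_part_app (U : finType) (K K' : list (box n * U)) x :
  interval_part (K ++ K') x <-> interval_part K x \/ interval_part K' x.
Proof.
split=> [[b [u [Hb Hx]]]|[[b [u [Hb Hx]]]|[b [u [Hb Hx]]]]].
- by case/in_app_iff: Hb => Hb'; [left|right]; exists b, u.
- by exists b, u; split=> //; apply: in_or_app; left.
- by exists b, u; split=> //; apply: in_or_app; right.
Qed.

End BoxGeometry.

Section Bisection.
Context {n : nat} (sel : box n -> nat).
Implicit Types (b : box n) (S : pset n).

Lemma valid_bisect1 b : valid_box b -> valid_box (fst (bisect sel b)).
Proof. by move=> V i /=; case: (_ == _) => //; have := V i; lra. Qed.

Lemma valid_bisect2 b : valid_box b -> valid_box (snd (bisect sel b)).
Proof. by move=> V i /=; case: (_ == _) => //; have := V i; lra. Qed.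

Lemma box_sub_bisect1 b S : valid_box b -> box_sub b S -> box_sub (fst (bisect sel b)) S.
Proof.
by move=> V Sb x Hx; apply: Sb => i; have := Hx i; have := V i => /=; case: (_ == _); lra.
Qed.

Lemma box_sub_bisect2 b S : valid_box b -> box_sub b S -> box_sub (snd (bisect sel b)) S.
Proof.
by move=> V Sb x Hx; apply: Sb => i; have := Hx i; have := V i => /=; case: (_ == _); lra.
Qed.

Lemma in_bisect b x : in_box b x ->
  in_box (fst (bisect sel b)) x \/ in_box (snd (bisect sel b)) x.
Proof.
move=> Hx; have [Hlo|Hhi] := classic (forall j : 'I_n, nat_of_ord j = sel b ->
  x j <= (fst b j + snd b j) / 2).
- left=> j /=; have := Hx j; case: eqP => // Ej; have := Hlo j Ej; lra.
- have [j /(imply_to_and (_ = _))[Ej /Rnot_le_lt Hj]] := not_all_ex_not _ _ Hhi.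
  right=> k /=; have := Hx k; case: eqP => // Ek.
  have -> : k = j by apply: val_inj; rewrite /= Ek Ej.
  lra.
Qed.

Lemma side_bisect1 b j : side (fst (bisect sel b)) j =
  if nat_of_ord j == sel b then side b j / 2 else side b j.
Proof. by rewrite /side /=; case: (_ == _) => //; lra. Qed.

Lemma side_bisect2 b j : side (snd (bisect sel b)) j =
  if nat_of_ord j == sel b then side b j / 2 else side b j.
Proof. by rewrite /side /=; case: (_ == _) => //; lra. Qed.

Variable eps : R.

Definition bisect_closed (P : box n -> Prop) : Prop :=
  forall b, P b -> ~ wid b < eps -> P (fst (bisect sel b)) /\ P (snd (bisect sel b)).


Lemma bisect_closed_inside S : bisect_closed (inside S).
Proof.
move=> b [V Sb] _; split; split; first [exact: valid_bisect1 V | exact: valid_bisect2 V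
  | exact: box_sub_bisect1 V Sb | exact: box_sub_bisect2 V Sb].
Qed.

Lemma bisect_closed_and P Q :
  bisect_closed P -> bisect_closed Q -> bisect_closed (fun b => P b /\ Q b).
Proof. by move=> HP HQ b [Pb Qb] W; have [? ?] := HP b Pb W; have [? ?] := HQ b Qb W. Qed.

End Bisection.

Section SplitMeasure.
Context {n : nat} (sel : box n -> nat) (eps : R).
Hypothesis sel_max : sel_ok sel.
Hypothesis eps_gt0 : 0 < eps.

Lemma sel_side_ge_eps (b : box n) : valid_box b -> ~ wid b < eps ->
  exists i : 'I_n, nat_of_ord i = sel b /\ eps <= side b i.
Proof.
move=> V W; case: (posnP n) => [n0|n_gt0].
- exfalso; apply: W; apply: (Rle_lt_trans _ 0) => //.
  by apply: wid_le => [|[i Hi]]; [lra | exfalso; move: Hi; rewrite n0].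
- have [i [Ei Hi]] := sel_max b n_gt0; exists i; split=> //.
  have : wid b <= side b i by apply: wid_le => //; have := V i; rewrite /side; lra.
  lra.
Qed.

(* Halving the selected side lowers one exponent of [m], so [\sum_i m i]
   bounds the number of successive bisections of non-small boxes. *)
Definition sides_below (b : box n) (m : 'I_n -> nat) : Prop :=
  forall i, side b i < eps * 2 ^ m i.

Lemma sides_below_exists (b : box n) : exists m, sides_below b m.
Proof.
have [N HN] := INR_unbounded (wid b / eps); exists (fun _ => N) => i.
have pow_ge : INR N <= 2 ^ N.
  elim: N {HN} => [|N IH]; first by rewrite /=; lra.
  rewrite S_INR /=; have : 1 <= 2 ^ N by apply: pow_R1_Rle; lra.
  lra.
have wid_lt : wid b < eps * INR N.
  have -> : wid b = eps * (wid b / eps) by field; lra.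
  exact: Rmult_lt_compat_l.
have := side_le_wid b i; have := Rmult_le_compat_l eps _ _ (Rlt_le _ _ eps_gt0) pow_ge.
lra.
Qed.

Lemma sides_below_bisect (b : box n) m : valid_box b -> sides_below b m -> ~ wid b < eps ->
  exists m', [/\ sides_below (fst (bisect sel b)) m', sides_below (snd (bisect sel b)) m'
                 & (\sum_(i < n) m' i < \sum_(i < n) m i)%N].
Proof.
move=> V B W; have [i0 [Ei0 Hi0]] := sel_side_ge_eps V W.
have m_gt0 : (0 < m i0)%N by case E: (m i0) (B i0) => [|k] //=; lra.
pose m' j := if nat_of_ord j == sel b then (m j).-1 else m j.
have Hm' j : (if nat_of_ord j == sel b then side b j / 2 else side b j) < eps * 2 ^ m' j.
  rewrite /m'; case: eqP => [Ej|_]; last exact: B.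
  have -> : j = i0 by apply: val_inj; rewrite /= Ej Ei0.
  have := B i0; case: (m i0) m_gt0 => [//|k] _ /=; lra.
exists m'; split=> [j|j|]; rewrite ?side_bisect1 ?side_bisect2 //.
rewrite (bigD1 i0) //= [X in (_ < X)%N](bigD1 i0) //= /m' Ei0 eqxx.
rewrite (eq_bigr m) => [|j /= Hj]; first by rewrite ltn_add2r prednK.
by case: eqP => // Ej; case/eqP: Hj; apply: val_inj; rewrite /= Ej Ei0.
Qed.

End SplitMeasure.

Section CPredSpec.
Context {n : nat} {U : finType} (F : U -> box n -> box n) (eps : R) (sel : box n -> nat).

Definition cpred_defined (Y : pset n) (todo : list (box n)) : Prop :=
  forall K Xl DX Xc, exists K' Xl' DX' Xc', cpred F eps sel Y todo K Xl DX Xc K' Xl' DX' Xc'.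

Section CPredTermination.
Hypothesis sel_max : sel_ok sel.
Hypothesis eps_gt0 : 0 < eps.

Lemma cpred_defined_cons Y (b : box n) m rest : valid_box b -> sides_below eps b m ->
  cpred_defined Y rest -> cpred_defined Y (b :: rest).
Proof.
move Es : (\sum_(i < n) m i)%N => s.
elim/ltn_ind: s b m rest Es => s IH b m rest Es V B Hrest K Xl DX Xc.
have [Hout|Hout] := classic (forall u, disjoint_from (F u b) Y).
  have [K' [Xl' [DX' [Xc' H]]]] := Hrest K Xl DX (b :: Xc).
  by exists K', Xl', DX', Xc'; apply: cpred_out.
have [[u Hin]|Hin] := classic (exists u, box_sub (F u b) Y).
  have [K' [Xl' [DX' [Xc' H]]]] := Hrest ((b, u) :: K) (b :: Xl) DX Xc.
  by exists K', Xl', DX', Xc'; apply: cpred_in Hin H.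
have [Hsmall|Hbig] := Rlt_dec (wid b) eps.
  have [K' [Xl' [DX' [Xc' H]]]] := Hrest K Xl (b :: DX) Xc.
  by exists K', Xl', DX', Xc'; apply: cpred_small.
have [m' [B1 B2 Hlt]] := sides_below_bisect sel_max eps_gt0 V B Hbig.
have Hlt' : (\sum_(i < n) m' i < s)%N by rewrite -Es.
have H2 := IH _ Hlt' _ _ _ erefl (valid_bisect2 sel V) B2 Hrest.
have [K' [Xl' [DX' [Xc' H]]]] := IH _ Hlt' _ _ _ erefl (valid_bisect1 sel V) B1 H2 K Xl DX Xc.
by exists K', Xl', DX', Xc'; apply: cpred_split.
Qed.

Lemma cpred_total Y (todo : list (box n)) : Forall valid_box todo -> cpred_defined Y todo.
Proof.
elim=> [|b l Vb _ IH]; first by move=> K Xl DX Xc; exists K, Xl, DX, Xc; exact: cpred_done.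
have [m B] := sides_below_exists eps_gt0 b.
exact: cpred_defined_cons Vb B IH.
Qed.

End CPredTermination.

(* The boxes CPred rejects: into [DX] (first case) or into [Xc] (second case). *)
Definition badbox (Y : pset n) (b : box n) : Prop :=
  (wid b < eps /\ ~ (exists v, box_sub (F v b) Y)) \/ (forall v, disjoint_from (F v b) Y).

Lemma badbox_sub (Y Y' : pset n) b : pset_sub Y' Y -> badbox Y b -> badbox Y' b.
Proof.
move=> Y'Y [[Hw Hns]|Hout]; [left; split=> // [[v Hv]]|right=> v x Hx /Y'Y].
- by apply: Hns; exists v => x /Hv /Y'Y.
- exact: Hout v x Hx.
Qed.

Definition cpred_inv (P : box n -> Prop) (Y : pset n) (K : list (box n * U))
    (Xl DX Xc : list (box n)) : Prop :=
  [/\ forall b u, In (b, u) K -> P b /\ box_sub (F u b) Y,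
      Forall (fun b => P b /\ box_sub b (interval_part K)) Xl
    & Forall (fun b => P b /\ badbox Y b) (DX ++ Xc)].

Lemma cpred_sound P Y todo K Xl DX Xc K' Xl' DX' Xc' :
  cpred F eps sel Y todo K Xl DX Xc K' Xl' DX' Xc' ->
  bisect_closed sel eps P -> Forall P todo -> cpred_inv P Y K Xl DX Xc ->
  cpred_inv P Y K' Xl' DX' Xc' /\
  pset_sub (boxes_set (todo ++ Xl ++ DX ++ Xc)) (boxes_set (Xl' ++ DX' ++ Xc')).
Proof.
move=> H HP; elim: H => {todo K Xl DX Xc K' Xl' DX' Xc'}.
- by move=> K Xl DX Xc _ Hinv; split=> // x.
- move=> b rest K Xl DX Xc K' Xl' DX' Xc' Hout _ IH /Forall_cons_iff[Pb Prest] [HK HXl Hbad].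
  have Hbad' : Forall (fun c => P c /\ badbox Y c) (DX ++ b :: Xc).
    apply: (incl_Forall _ (Forall_cons _ (conj Pb (or_intror Hout)) Hbad)) => c.
    rewrite /= !in_app_iff /= ?in_app_iff; tauto.
  have [Hinv' Hcov] := IH Prest (And3 HK HXl Hbad').
  split=> // x Hx; apply: Hcov; apply: boxes_set_incl Hx => c.
  rewrite /= !in_app_iff /= ?in_app_iff; tauto.
- move=> b u rest K Xl DX Xc K' Xl' DX' Xc' _ Hin _ IH /Forall_cons_iff[Pb Prest] [HK HXl Hbad].
  have HK' c v : In (c, v) ((b, u) :: K) -> P c /\ box_sub (F v c) Y.
    by case=> [[<- <-]|/HK].
  have HXl' : Forall (fun c => P c /\ box_sub c (interval_part ((b, u) :: K))) (b :: Xl).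
    constructor; first by split=> // x Hx; exists b, u; split=> //; left.
    apply: Forall_impl HXl => c [Pc Hc]; split=> // x /Hc[c' [u' [Hc' Hx]]].
    by exists c', u'; split=> //; right.
  have [Hinv' Hcov] := IH Prest (And3 HK' HXl' Hbad).
  split=> // x Hx; apply: Hcov; apply: boxes_set_incl Hx => c.
  rewrite /= !in_app_iff /= ?in_app_iff; tauto.
- move=> b rest K Xl DX Xc K' Xl' DX' Xc' _ Hns Hw _ IH /Forall_cons_iff[Pb Prest] [HK HXl Hbad].
  have Hbad' := Forall_cons _ (conj Pb (or_introl (conj Hw Hns))) Hbad.
  have [Hinv' Hcov] := IH Prest (And3 HK HXl Hbad').
  split=> // x Hx; apply: Hcov; apply: boxes_set_incl Hx => c.
  rewrite /= !in_app_iff /= ?in_app_iff; tauto.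
- move=> b rest K Xl DX Xc K' Xl' DX' Xc' _ _ Hbig _ IH /Forall_cons_iff[Pb Prest] Hinv.
  have [P1 P2] := HP b Pb Hbig.
  have [Hinv' Hcov] := IH (Forall_cons _ P1 (Forall_cons _ P2 Prest)) Hinv.
  split=> // x /boxes_set_cons[/(in_bisect sel)[Hx|Hx]|[c [Hc Hx]]]; apply: Hcov.
  + by exists (fst (bisect sel b)); split=> //; left.
  + by exists (snd (bisect sel b)); split=> //; right; left.
  + by exists c; split=> //; right; right.
Qed.

Lemma CPred_sound P Xin Y K Xl DX Xc : CPred F eps sel Xin Y K Xl DX Xc ->
  bisect_closed sel eps P -> Forall P Xin ->
  cpred_inv P (boxes_set Y) K Xl DX Xc /\
  pset_sub (boxes_set Xin) (boxes_set (Xl ++ DX ++ Xc)).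
Proof.
move=> H HP HXin.
have [|Hinv Hcov] := cpred_sound H HP HXin; first by split=> // b u [].
by split=> // x Hx; apply: Hcov; rewrite /= cats0.
Qed.

End CPredSpec.

Section FiniteClosure.
Context {n : nat} (sel : box n -> nat) (eps : R).
Hypothesis sel_max : sel_ok sel.
Hypothesis eps_gt0 : 0 < eps.

Fixpoint bisections (k : nat) (b : box n) : list (box n) :=
  b :: match k with
       | O => nil
       | S k => if Rlt_dec (wid b) eps then nil
                else bisections k (fst (bisect sel b)) ++ bisections k (snd (bisect sel b))
       end.

Lemma bisections_closed k (b : box n) m : valid_box b -> sides_below eps b m ->
  (\sum_(i < n) m i <= k)%N -> bisect_closed sel eps (fun c => In c (bisections k b)).
Proof.
elim: k b m => [|k IH] b m V B Hk c /= [<-|Hc] W //.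
- have [m' [_ _ Hlt]] := sides_below_bisect sel_max eps_gt0 V B W.
  by move: Hk Hlt; rewrite leqn0 => /eqP->.
- case: Rlt_dec => // Hbig.
  by split; right; apply: in_or_app; [left|right]; case: k {IH Hk}; left.
- case: Rlt_dec Hc => // Hbig Hc.
  have [m' [B1 B2 Hlt]] := sides_below_bisect sel_max eps_gt0 V B Hbig.
  have Hk' : (\sum_(i < n) m' i <= k)%N by rewrite -ltnS; exact: leq_trans Hlt Hk.
  case/in_app_iff: Hc => Hc'.
  + have [] := IH _ _ (valid_bisect1 sel V) B1 Hk' c Hc' W.
    by split; right; apply: in_or_app; left.
  + have [] := IH _ _ (valid_bisect2 sel V) B2 Hk' c Hc' W.
    by split; right; apply: in_or_app; right.
Qed.

Lemma finite_bisect_closure (L : list (box n)) : Forall valid_box L ->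
  exists D, bisect_closed sel eps (fun b => In b D) /\ incl L D.
Proof.
elim=> [|b l Vb _ [D [HD LD]]]; first by exists nil; split=> // c [].
have [m B] := sides_below_exists eps_gt0 b.
set k := (\sum_(i < n) m i)%N.
exists (bisections k b ++ D); split=> [c /in_app_iff[Hc|Hc] W|c [<-|Hc]].
- have [] := bisections_closed Vb B (leqnn k) Hc W.
  by split; apply: in_or_app; left.
- by have [] := HD c Hc W; split; apply: in_or_app; right.
- by apply: in_or_app; left; case: k; left.
- by apply: in_or_app; right; apply: LD.
Qed.

End FiniteClosure.

Definition asbool (P : Prop) : bool := if excluded_middle_informative P then true else false.

Lemma asboolP (P : Prop) : reflect P (asbool P).
Proof. by rewrite /asbool; case: excluded_middle_informative => H; constructor. Qed.

Section CountSat.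
Context {T : Type}.

Definition count_sat (Q : T -> Prop) (D : list T) : nat := count (fun d => asbool (Q d)) D.

Lemma count_sat_le (Q Q' : T -> Prop) D :
  (forall d, Q d -> Q' d) -> (count_sat Q D <= count_sat Q' D)%N.
Proof. by move=> H; apply: sub_count => d /asboolP /H /asboolP. Qed.

Lemma count_sat_lt (Q Q' : T -> Prop) D d : (forall d, Q d -> Q' d) ->
  In d D -> Q' d -> ~ Q d -> (count_sat Q D < count_sat Q' D)%N.
Proof.
move=> H; elim: D => [//|e D IH] /= [<-|Hd] Q'd nQd; rewrite /count_sat /=.
- case: asboolP => // _; case: asboolP => // _.
  by rewrite add0n add1n ltnS; apply: count_sat_le.
- rewrite -addnS; apply: leq_add; last exact: IH.
  by case: asboolP => [/H|_]; case: asboolP.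
Qed.

End CountSat.


Section Strategies.
Context {n : nat} {U : finType} (f : U -> pt n -> pt n) (Xs Om : pset n).

Definition conforming (kap : pt n -> U -> Prop) (xs : nat -> pt n) (us : nat -> U) : Prop :=
  forall t, kap (xs t) (us t) /\ xs t.+1 = f (us t) (xs t).

Definition winning_region (S : pset n) (kap : pt n -> U -> Prop) : Prop :=
  [/\ pset_sub S Xs, forall x, S x -> exists u, kap x u,
      forall x u, S x -> kap x u -> S (f u x)
    & forall xs us, S (xs 0%N) -> conforming kap xs us ->
        exists N, forall t, (N <= t)%N -> Om (xs t)].

Lemma conforming_shift kap xs us s : conforming kap xs us ->
  conforming kap (fun t => xs (s + t)%N) (fun t => us (s + t)%N).
Proof. by move=> H t; rewrite addnS; apply: H. Qed.

Lemma conforming_invariant (S : pset n) kap kap' xs us :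
  (forall x u, S x -> kap' x u -> kap x u) -> (forall x u, S x -> kap x u -> S (f u x)) ->
  S (xs 0%N) -> conforming kap' xs us -> (forall t, S (xs t)) /\ conforming kap xs us.
Proof.
move=> Hkap Hinv S0 Hconf.
have St t : S (xs t).
  elim: t => [//|t IH]; have [Hk ->] := Hconf t.
  exact: Hinv IH (Hkap _ _ IH Hk).
by split=> // t; have [Hk Ht] := Hconf t; split=> //; apply: Hkap.
Qed.

Lemma winning_region_Win0 S kap : winning_region S kap -> pset_sub S (Win f Xs Om 0).
Proof.
case=> SX Stot Sinv Sev x Sx; split; first exact: SX.
have [u0 _] := Stot x Sx.
exists (fun y u => S y -> kap y u); split.
  by move=> y; have [/Stot[u Hu]|nSy] := classic (S y); [exists u | exists u0].
move=> xs us ds x0 Hs; subst x.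
have Hconf : conforming (fun y u => S y -> kap y u) xs us.
  move=> t; have [Hk [Hd Hx]] := Hs t; split=> //.
  apply: functional_extensionality => i; rewrite Hx.
  have := Hd i; have := Rle_abs (ds t i); have := Rle_abs (- ds t i); rewrite Rabs_Ropp.
  lra.
have [Sall Hconf'] := conforming_invariant (fun y u Sy H => H Sy) Sinv Sx Hconf.
split=> [t|]; first exact: SX.
by have [N HN] := Sev _ _ Sx Hconf'; exists N => t /leP; apply: HN.
Qed.

Variable F : U -> box n -> box n.
Hypothesis F_incl : forall u, inclusion_function (f u) (F u).

(* A play following a new layer [K'] either enters the older layers [K] or stays
   in boxes of [K'] contained in [Om]. *)
Definition layer_ok (K K' : list (box n * U)) : Prop :=
  forall b u, In (b, u) K' -> [/\ valid_box b, box_sub b Xs,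
    box_sub (F u b) (interval_part (K ++ K'))
  & box_sub b Om \/ box_sub (F u b) (interval_part K)].

Inductive layered : list (box n * U) -> Prop :=
| layered_nil : layered nil
| layered_app K K' : layered K -> layer_ok K K' -> layered (K ++ K').

Lemma layered_round K Kz Kv : layered K ->
  (forall b u, In (b, u) Kz -> inside Xs b /\ box_sub (F u b) (interval_part K)) ->
  (forall b u, In (b, u) Kv -> inside (fun x => Xs x /\ Om x) b /\
     box_sub (F u b) (fun x => interval_part (K ++ Kz) x \/ interval_part Kv x)) ->
  layered ((K ++ Kz) ++ Kv).
Proof.
move=> HK HKz HKv; apply: layered_app; first apply: layered_app => // b u /HKz[[Vb Sb] Himg].
  split=> //; last by right.
  by move=> x /Himg Kx; apply/interval_part_app; left.
move=> b u /HKv[[Vb Sb] Himg].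
have [Sb' Ob] : box_sub b Xs /\ box_sub b Om by split=> x /Sb[].
split=> //; last by left.
by move=> x /Himg[Kx|Kvx]; apply/interval_part_app; [left|right].
Qed.

Definition layer_strategy (K K' : list (box n * U)) (kap : pt n -> U -> Prop) x u : Prop :=
  (interval_part K x /\ kap x u) \/ (~ interval_part K x /\ exists b, In (b, u) K' /\ in_box b x).

Lemma layer_strategy_invariant K K' kap x u : layer_ok K K' ->
  (forall x u, interval_part K x -> kap x u -> interval_part K (f u x)) ->
  layer_strategy K K' kap x u -> interval_part (K ++ K') (f u x).
Proof.
move=> HK' Kinv [[Kx Hk]|[_ [b [Hb Hx]]]].
- by apply/interval_part_app; left; apply: Kinv.
- by have [Vb _ Himg _] := HK' b u Hb; apply: Himg; apply: (F_incl u).1.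
Qed.

Lemma layer_strategy_eventually K K' kap xs us : layer_ok K K' ->
  winning_region (interval_part K) kap -> interval_part (K ++ K') (xs 0%N) ->
  conforming (layer_strategy K K' kap) xs us -> exists N, forall t, (N <= t)%N -> Om (xs t).
Proof.
move=> HK' [_ _ Kinv Kev] S0 Hconf.
have [[s Ks]|notK] := classic (exists s, interval_part K (xs s)).
- have Hrestr y u : interval_part K y -> layer_strategy K K' kap y u -> kap y u.
    by move=> Ky [[]|[]].
  have Ks' : interval_part K (xs (s + 0)%N) by rewrite addn0.
  have [_ Hconf'] := conforming_invariant Hrestr Kinv Ks' (conforming_shift s Hconf).
  have [N HN] := Kev _ _ Ks' Hconf'.
  exists (s + N)%N => t Ht; have Hst : (s <= t)%N := leq_trans (leq_addr N s) Ht.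
  by rewrite -(subnKC Hst); apply: HN; rewrite -(leq_add2l s) subnKC.
- exists 0%N => t _; have [[Kt _]|[_ [b [Hb Hx]]]] := (Hconf t).1.
    by case: notK; exists t.
  have [Vb _ _ [/(_ _ Hx) //|Himg]] := HK' b (us t) Hb.
  case: notK; exists t.+1; rewrite (Hconf t).2; apply: Himg.
  exact: (F_incl _).1.
Qed.

Lemma layered_winning K : layered K -> exists kap, winning_region (interval_part K) kap.
Proof.
elim=> {K} [|K K' _ [kap Hwin] HK'].
  by exists (fun _ _ => True); split=> [x|x|x u|xs us] [? [? [[]]]].
have [KX Ktot Kinv _] := Hwin.
exists (layer_strategy K K' kap); split.
- move=> x /interval_part_app[/KX //|[b [u [Hb Hx]]]].
  by have [_ Sb _ _] := HK' b u Hb; apply: Sb.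
- move=> x Sx; have [Kx|notK] := classic (interval_part K x).
    by have [u Hu] := Ktot x Kx; exists u; left.
  case/interval_part_app: Sx => [//|[b [u [Hb Hx]]]].
  by exists u; right; split=> //; exists b.
- by move=> x u _; apply: layer_strategy_invariant.
- by move=> xs us; apply: layer_strategy_eventually.
Qed.

End Strategies.

Lemma choice_trajectory (S A : Type) (step : S -> A -> S -> Prop) (s0 : S) :
  (forall s, exists a s', step s a s') ->
  exists (ss : nat -> S) (acts : nat -> A), ss 0%N = s0 /\ forall t, step (ss t) (acts t) (ss t.+1).
Proof.
move=> Htot; have [g Hg] : exists g : S -> A * S, forall s, step s (g s).1 (g s).2.
  by apply: (choice (fun s p => step s p.1 p.2)) => s; have [a [s' H]] := Htot s; exists (a, s').
pose ss := fix ss t := if t is t'.+1 then (g (ss t')).2 else s0.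
by exists ss, (fun t => (g (ss t)).1); split.
Qed.

Lemma no_infinite_descent (r : nat -> nat) N : ~ (forall t, (N <= t)%N -> r t = (r t.+1).+1).
Proof.
move=> Hdec; have Hj j : (r (N + j) + j)%N = r N.
  elim: j => [|j IH]; first by rewrite !addn0.
  by rewrite -IH (Hdec (N + j)%N (leq_addr _ _)) addnS addSn addnS.
by have := Hj (r N).+1; lia.
Qed.

Section Escape.
Context {n : nat} {U : finType} (f : U -> pt n -> pt n) (Xs Om : pset n) (delta : R).

Definition disturbed (v : U) (x d : pt n) : pt n := fun i => f v x i + d i.

Definition admissible (d : pt n) : Prop := forall i, Rabs (d i) <= delta.

(* [escapes T k x]: against every control, some disturbance keeps the state out
   of [T], and the state leaves [Xs /\ Om] after at most [k + 1] steps. *)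
Fixpoint escapes (T : pset n) (k : nat) (x : pt n) : Prop :=
  forall v, exists d, [/\ admissible d, ~ T (disturbed v x d) &
    Xs (disturbed v x d) -> Om (disturbed v x d) ->
    if k is k'.+1 then escapes T k' (disturbed v x d) else False].

Lemma escapesE T k x : escapes T k x = forall v, exists d, [/\ admissible d,
  ~ T (disturbed v x d) & Xs (disturbed v x d) -> Om (disturbed v x d) ->
  if k is k'.+1 then escapes T k' (disturbed v x d) else False].
Proof. by case: k. Qed.

Lemma escapesS T k x : escapes T k x -> escapes T k.+1 x.
Proof.
elim: k x => [|k IH] x H v; have [d [Hd HT Hnext]] := H v; exists d; split=> // X O.
- by case: (Hnext X O).
- exact: IH (Hnext X O).
Qed.

Lemma escapes_le T k k' x : (k <= k')%N -> escapes T k x -> escapes T k' x.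
Proof.
move=> /subnKC <-; elim: (k' - k)%N => [|j IH] H; rewrite ?addn0 ?addnS //.
exact/escapesS/IH.
Qed.

Lemma escapes_lt T k c x : (k < c)%N ->
  escapes T k x -> if c is c'.+1 then escapes T c' x else False.
Proof. by case: c => [//|c] Hk; apply: escapes_le. Qed.

Section Adversary.
Hypothesis delta_ge0 : 0 <= delta.
Variable T : pset n.
Hypothesis avoid_outside : forall x, Xs x -> ~ Om x -> ~ T x ->
  forall v, exists d, admissible d /\ ~ T (disturbed v x d).
Hypothesis escape_inside : forall y, Xs y -> Om y -> ~ T y -> exists k, escapes T k y.

Definition escape_inv (s : pt n * nat) : Prop :=
  ~ T s.1 /\ (Xs s.1 -> Om s.1 -> escapes T s.2 s.1).

Lemma escape_inv_step x k v : escape_inv (x, k) -> Xs x ->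
  exists d k', [/\ admissible d, escape_inv (disturbed v x d, k') &
    Om x -> Xs (disturbed v x d) -> Om (disturbed v x d) -> k = k'.+1].
Proof.
move=> [/= Tx Hesc] X; have [O|nO] := classic (Om x).
- move: (Hesc X O) => {Hesc}; rewrite escapesE => /(_ v)[d [Hd HT Hnext]].
  exists d, k.-1; split=> //; last by move=> _ X' O'; case: k Hnext (Hnext X' O').
  by split=> //= X' O'; case: k Hnext (Hnext X' O').
- have [d [Hd HT]] := avoid_outside X nO Tx v.
  have [[X' O']|nXO] := classic (Xs (disturbed v x d) /\ Om (disturbed v x d)).
    have [k' Hk'] := escape_inside X' O' HT.
    by exists d, k'; split=> //; split.
  by exists d, 0%N; split=> //; split=> // X' O'; case: nXO.
Qed.

Lemma Win_sub_of_escapes : pset_sub (Win f Xs Om delta) T.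
Proof.
move=> x0 [X0 [kap [kap_tot Hwin]]]; apply: NNPP => Tx0.
pose step (s : pt n * nat) (a : U * pt n) (s' : pt n * nat) :=
  [/\ kap s.1 a.1, admissible a.2, s'.1 = disturbed a.1 s.1 a.2 &
      escape_inv s -> Xs s.1 -> escape_inv s' /\
        (Om s.1 -> Xs s'.1 -> Om s'.1 -> s.2 = s'.2.+1)].
have step_tot s : exists a s', step s a s'.
  case: s => x k; have [u Hu] := kap_tot x.
  have [[Hinv X]|nInv] := classic (escape_inv (x, k) /\ Xs x).
    have [d [k' [Hd Hinv' Hdec]]] := escape_inv_step u Hinv X.
    by exists (u, d), (disturbed u x d, k').
  exists (u, fun _ => 0), (disturbed u x (fun _ => 0), 0%N); split=> //=.
    by move=> i /=; rewrite Rabs_R0.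
  by move=> Hinv X; case: nInv.
have [k0 Hk0] : exists k0, escape_inv (x0, k0).
  have [O|nO] := classic (Om x0); last by exists 0%N; split=> // _ /nO.
  by have [k Hk] := escape_inside X0 O Tx0; exists k.
have [ss [acts [s0 Hss]]] := choice_trajectory (x0, k0) step_tot.
have Hconf t : kap (ss t).1 (acts t).1 /\ admissible (acts t).2 /\
    forall i, (ss t.+1).1 i = f (acts t).1 (ss t).1 i + (acts t).2 i.
  by have [Hk Hd -> _] := Hss t.
have [Xall [N HN]] := Hwin (fun t => (ss t).1) _ _ (f_equal fst s0) Hconf.
have Inv t : escape_inv (ss t).
  by elim: t => [|t IH]; [rewrite s0 | have [_ _ _ /(_ IH (Xall t))[]] := Hss t].
(* From time [N] on the play stays in [Xs /\ Om], where the rank drops at each step. *)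
apply: (no_infinite_descent (r := fun t => (ss t).2) (N := N)) => t /leP Ht.
have [_ _ _ /(_ (Inv t) (Xall t))[_ ->]] := Hss t => //; apply: HN => //; lia.
Qed.

End Adversary.
End Escape.



Section InnerLoop.
Context {n : nat} {U : finType} (F : U -> box n -> box n) (eps : R) (sel : box n -> nat).
Variable Z : list (box n).

Lemma inner_structure P X Xt V G2 Kv Xf Kvf G2f :
  bisect_closed sel eps P -> (forall b, P b -> valid_box b) ->
  inner F eps sel Z X Xt V G2 Kv Xf Kvf G2f -> Xt = Z ++ V -> Forall P V -> Forall P G2 ->
  Forall (fun b => In b Z \/ P b) X ->
  [/\ pset_sub (boxes_set Z) (boxes_set Xf), pset_sub (boxes_set Xf) (boxes_set Xt),
      Forall P G2f, pset_sub (boxes_set (V ++ G2)) (boxes_set (Xf ++ G2f))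
    & Forall (fun b => In b Z \/ P b) Xf].
Proof.
move=> HP PV H; elim: H => {X Xt V G2 Kv Xf Kvf G2f}.
- move=> X Xt V G2 Kv Heq E _ HG2 HX; subst Xt; split=> // x.
  + by move=> Zx; apply: (Heq x).1; apply/boxes_set_app; left.
  + exact: (Heq x).2.
  + case/boxes_set_app=> [Vx|G2x]; apply/boxes_set_app; [left|by right].
    by apply: (Heq x).1; apply/boxes_set_app; right.
- move=> X Xt V G2 Kv Kv' Vl DV Vc Xf Kvf G2f _ HC _ IH E HV HG2 _; subst Xt.
  have HP' : bisect_closed sel eps (fun b => P b /\ inside (boxes_set V) b).
    by apply: bisect_closed_and => //; apply: bisect_closed_inside.
  have [[_ HVl Hbad] Hcov] := CPred_sound HC HP' (Forall_inside_self PV HV).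
  have [|||ZXf XfXt' HG2f Hcov' HXf] := IH erefl.
  + by apply: Forall_impl HVl => b [[]].
  + by apply/Forall_app; split=> //; apply: Forall_impl Hbad => b [[]].
  + exact: Forall_in_app_or.
  split=> // x.
  + move=> /XfXt' /boxes_set_app[Zx|[b [Hb Hx]]]; apply/boxes_set_app; [by left|right].
    by have [[_ [_ Sb]] _] := (Forall_forall _ _).1 HVl b Hb; apply: Sb.
  + move=> /boxes_set_app[/Hcov|] Hx; apply: Hcov'; apply: boxes_set_incl Hx => c;
      rewrite !in_app_iff; tauto.
Qed.

Lemma inner_sound P X Xt V G2 Kv Xf Kvf G2f :
  bisect_closed sel eps P -> inner F eps sel Z X Xt V G2 Kv Xf Kvf G2f -> Xt = Z ++ V ->
  Forall P V -> (forall b u, In (b, u) Kv -> P b /\ box_sub (F u b) (boxes_set X)) ->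
  pset_sub (fun x => boxes_set V x /\ boxes_set X x) (interval_part Kv) ->
  (forall b u, In (b, u) Kvf ->
     P b /\ box_sub (F u b) (fun x => boxes_set Z x \/ interval_part Kvf x)) /\
  pset_sub (boxes_set Xf) (fun x => boxes_set Z x \/ interval_part Kvf x).
Proof.
move=> HP H; elim: H => {X Xt V G2 Kv Xf Kvf G2f}.
- move=> X Xt V G2 Kv Heq E _ HKv HVX; subst Xt.
  have HX x : boxes_set X x -> boxes_set Z x \/ interval_part Kv x.
    move=> Xx; case/boxes_set_app: ((Heq x).2 Xx) => [|Vx]; first by left.
    by right; apply: HVX.
  by split=> // b u /HKv[Pb Himg]; split=> // x /Himg /HX.
- move=> X Xt V G2 Kv Kv' Vl DV Vc Xf Kvf G2f _ HC _ IH E HV _ _; subst Xt.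
  have [[HKv' HVl _] _] := CPred_sound HC HP HV.
  apply: IH => //; first by apply: Forall_impl HVl => b [].
  by move=> x [[b [Hb Hx]] _]; have [_ Sb] := (Forall_forall _ _).1 HVl b Hb; apply: Sb.
Qed.
End InnerLoop.


Section Robustness.
Context {n : nat} {U : finType} (f : U -> pt n -> pt n) (F : U -> box n -> box n)
  (Xs Om : pset n) (rho delta eps : R) (sel : box n -> nat).
Hypothesis F_incl : forall u, inclusion_function (f u) (F u).
Hypothesis F_wid : forall u b, valid_box b -> box_sub b Xs -> wid (F u b) <= rho * wid b.
Hypothesis rho_gt0 : 0 < rho.
Hypothesis delta_ge0 : 0 <= delta.
Hypothesis rho_eps_le : rho * eps <= delta.

(* The enclosure of a box of width [< eps] has width at most [rho * eps <= delta]: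
   each of its points is reached from any point of the box by an admissible
   disturbance. *)
Lemma badbox_escape_step (Y : pset n) b x : inside Xs b -> badbox F eps Y b -> in_box b x ->
  forall v, exists d, admissible delta d /\ ~ Y (disturbed f v x d).
Proof.
move=> [V S] [[Hw Hns]|Hout] Hx v.
- have [z [Hz Yz]] : exists z, in_box (F v b) z /\ ~ Y z.
    apply: NNPP => Hno; apply: Hns; exists v => z Hz.
    by apply: NNPP => Yz; apply: Hno; exists z.
  exists (fun i => z i - f v x i); split.
    move=> i; have := (F_incl v).1 b V x Hx i; have := Hz i.
    have := side_le_wid (F v b) i; have := F_wid v V S.
    have : rho * wid b <= rho * eps by apply: Rmult_le_compat_l; lra.
    by rewrite /side => *; apply: Rabs_le; lra.
  have -> // : disturbed f v x (fun i => z i - f v x i) = z.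
  by apply: functional_extensionality => i; rewrite /disturbed; ring.
- exists (fun _ => 0); split; first by move=> i; rewrite Rabs_R0.
  have -> : disturbed f v x (fun _ => 0) = f v x.
    by apply: functional_extensionality => i; rewrite /disturbed; ring.
  exact: Hout v _ ((F_incl v).1 b V x Hx).
Qed.

(* [c] bounds the escape ranks of the points dropped from [Xt] in earlier
   rounds.  A point dropped in the current round lies in a rejected box, so one
   disturbed step takes it out of [Xt]: its rank is at most [c]. *)
Lemma inner_complete Z X Xt V G2 Kv Xf Kvf G2f :
  inner F eps sel Z X Xt V G2 Kv Xf Kvf G2f -> Xt = Z ++ V ->
  Forall (inside Xs) V -> Forall (inside Xs) G2 -> forall c,
  (forall y, Xs y -> Om y -> ~ boxes_set Xt y -> ~ boxes_set Xf y ->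
     exists k, (k < c)%N /\ escapes f Xs Om delta (boxes_set Xf) k y) ->
  forall y, Xs y -> Om y -> ~ boxes_set Xf y -> exists k, escapes f Xs Om delta (boxes_set Xf) k y.
Proof.
move=> H; elim: H => {X Xt V G2 Kv Xf Kvf G2f}.
- move=> X Xt V G2 Kv Heq _ _ _ c Hprev y Xy Oy nXy.
  by have [k [_ Hk]] := Hprev y Xy Oy (fun h => nXy ((Heq y).1 h)) nXy; exists k.
- move=> X Xt V G2 Kv Kv' Vl DV Vc Xf Kvf G2f _ HC Hin IH E HV HG2 c Hprev; subst Xt.
  have HXs : bisect_closed sel eps (inside Xs) by apply: bisect_closed_inside.
  have HP' : bisect_closed sel eps (fun b => inside Xs b /\ inside (boxes_set V) b).
    by apply: bisect_closed_and => //; apply: bisect_closed_inside.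
  have [[_ HVl Hbad] Hcov] := CPred_sound HC HP' (Forall_inside_self (@inside_valid _ Xs) HV).
  have HVl' : Forall (inside Xs) Vl by apply: Forall_impl HVl => b [[]].
  have HG2' : Forall (inside Xs) (G2 ++ DV ++ Vc).
    by apply/Forall_app; split=> //; apply: Forall_impl Hbad => b [[]].
  have [_ XfXt _ _ _] := inner_structure HXs (@inside_valid _ Xs)
    Hin erefl HVl' HG2' (Forall_in_app_or Z HV).
  have XfZV x : boxes_set Xf x -> boxes_set (Z ++ V) x.
    move=> /XfXt /boxes_set_app[Zx|[b [Hb Hx]]]; apply/boxes_set_app; [by left|right].
    by have [[_ [_ Sb]] _] := (Forall_forall _ _).1 HVl b Hb; apply: Sb.
  apply: (IH erefl HVl' HG2' c.+1) => y Xy Oy nZVl nXf.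
  have [ZVy|nZV] := classic (boxes_set (Z ++ V) y); last first.
    by have [k [Hk Hesc]] := Hprev y Xy Oy nZV nXf; exists k; split=> //; apply: ltnW.
  have [b [Hb Hyb]] : exists b, In b (DV ++ Vc) /\ in_box b y.
    case/boxes_set_app: ZVy => [Zy|Vy]; first by case: nZVl; apply/boxes_set_app; left.
    case/boxes_set_app: (Hcov y Vy) => [Vly|[b [Hb Hyb]]]; last by exists b.
    by case: nZVl; apply/boxes_set_app; right.
  have [[Sb _] Bb] := (Forall_forall _ _).1 Hbad b Hb.
  exists c; split=> //; rewrite escapesE => v.
  have [d [Hd nZVd]] := badbox_escape_step Sb Bb Hyb v.
  exists d; split=> // [/XfZV //|X' O'].
  have [k [Hk Hesc]] := Hprev _ X' O' nZVd (fun h => nZVd (XfZV _ h)).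
  exact: escapes_lt Hk Hesc.
Qed.

End Robustness.



Section OuterLoop.
Context {n : nat} {U : finType} (f : U -> pt n -> pt n) (F : U -> box n -> box n)
  (Xs Om : pset n) (rho delta eps : R) (sel : box n -> nat).
Hypothesis F_incl : forall u, inclusion_function (f u) (F u).
Hypothesis F_wid : forall u b, valid_box b -> box_sub b Xs -> wid (F u b) <= rho * wid b.
Hypothesis rho_gt0 : 0 < rho.
Hypothesis delta_ge0 : 0 <= delta.
Hypothesis rho_eps_le : rho * eps <= delta.

(* [outer_escape]: before the first round [Y] is all of [Xs]; afterwards [G1]
   holds the boxes rejected against [Y]. *)
Record outer_inv (K : list (box n * U)) (Yt : list (box n)) (Y : pset n)
    (G1 G2 : list (box n)) : Prop := OuterInv {
  outer_layered : layered Xs Om F K;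
  outer_sound : pset_sub (boxes_set Yt) (interval_part K);
  outer_G1 : Forall (inside Xs) G1;
  outer_G2 : Forall (inside (fun x => Xs x /\ Om x)) G2;
  outer_cover_out : forall x, Xs x -> ~ Om x -> boxes_set (Yt ++ G1) x;
  outer_cover_in : forall x, Xs x -> Om x -> boxes_set (Yt ++ G2) x;
  outer_escape : pset_sub Xs Y \/ Forall (badbox F eps Y) G1 /\
    forall y, Xs y -> Om y -> ~ boxes_set Yt y ->
      exists k, escapes f Xs Om delta (boxes_set Yt) k y }.

Lemma outer_inv_init G1 G2 :
  Forall (inside Xs) G1 -> Forall (inside (fun x => Xs x /\ Om x)) G2 ->
  (forall x, Xs x -> ~ Om x -> boxes_set G1 x) -> (forall x, Xs x -> Om x -> boxes_set G2 x) ->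
  outer_inv nil nil Xs G1 G2.
Proof. by move=> HG1 HG2 Hout Hin; split=> //; [exact: layered_nil | move=> x [? []] | left]. Qed.

Lemma outer_inv_stop K Yt Y G1 G2 : outer_inv K Yt Y G1 G2 -> seteq (boxes_set Yt) Y ->
  pset_sub (Win f Xs Om delta) (interval_part K).
Proof.
case=> _ HYt HG1 _ Hcov _ Hesc Heq x0 Hx0; apply: HYt.
case: Hesc => [XY|[Hbad Hesc]]; first by apply/(Heq x0)/XY; case: Hx0.
apply: (Win_sub_of_escapes delta_ge0 _ Hesc Hx0) => x X nO nYt v.
case/boxes_set_app: (Hcov x X nO) => [//|[b [Hb Hxb]]].
have Bb := badbox_sub (fun y => (Heq y).1) ((Forall_forall _ _).1 Hbad b Hb).
exact: (badbox_escape_step F_incl F_wid rho_gt0 delta_ge0 rho_eps_le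
  ((Forall_forall _ _).1 HG1 b Hb) Bb Hxb v).
Qed.

Lemma outer_inv_step K Yt Y G1 G2 Kz Zl DZ Zc Xf Kv G2' :
  outer_inv K Yt Y G1 G2 -> CPred F eps sel G1 Yt Kz Zl DZ Zc ->
  inner F eps sel (Yt ++ Zl) nil ((Yt ++ Zl) ++ G2) G2 nil nil Xf Kv G2' ->
  outer_inv ((K ++ Kz) ++ Kv) Xf (boxes_set Yt) (DZ ++ Zc) G2'.
Proof.
case=> HK HYt HG1 HG2 Hcov_out Hcov_in _ HC Hin.
have HXs : bisect_closed sel eps (inside Xs) by apply: bisect_closed_inside.
have HXOm : bisect_closed sel eps (inside (fun x => Xs x /\ Om x)) by apply: bisect_closed_inside.
have [[HKz HZl Hbad] HcovG1] := CPred_sound HC HXs HG1.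
have [ZXf _ HG2' HcovG2 _] := inner_structure HXOm (@inside_valid _ _) Hin erefl HG2 (Forall_nil _)
  (Forall_nil _).
have [HKv XfKv] := inner_sound HXOm Hin erefl HG2 (fun b u => False_ind _)
  (fun x Hx => False_ind _ (boxes_set_nil (proj2 Hx))).
have HZK : pset_sub (boxes_set (Yt ++ Zl)) (interval_part (K ++ Kz)).
  move=> x /boxes_set_app[/HYt Kx|[b [Hb Hx]]]; apply/interval_part_app; [by left|right].
  by have [_ Sb] := (Forall_forall _ _).1 HZl b Hb; apply: Sb.
have YtXf x : boxes_set Yt x -> boxes_set Xf x.
  by move=> Ytx; apply: ZXf; apply/boxes_set_app; left.
split.
- apply: layered_round => // b u.
    by case/HKz=> Sb Himg; split=> // x /Himg /HYt.
  by case/HKv=> Sb Himg; split=> // x /Himg[/HZK|]; [left|right].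
- by move=> x /XfKv[/HZK Kx|Kvx]; apply/interval_part_app; [left|right].
- by apply: Forall_impl Hbad => b [].
- exact: HG2'.
- move=> x X nO; case/boxes_set_app: (Hcov_out x X nO) => [/YtXf Xfx|/HcovG1].
    by apply/boxes_set_app; left.
  case/boxes_set_app=> [Zlx|Bx]; apply/boxes_set_app; [left|by right].
  by apply: ZXf; apply/boxes_set_app; right.
- move=> x X O; case/boxes_set_app: (Hcov_in x X O) => [/YtXf Xfx|G2x].
    by apply/boxes_set_app; left.
  by apply: HcovG2; rewrite cats0.
- right; split; first by apply: Forall_impl Hbad => b [].
  have HG2Xs : Forall (inside Xs) G2 by apply: Forall_impl HG2 => b; apply: inside_sub => x [].
  apply: (inner_complete F_incl F_wid rho_gt0 delta_ge0 rho_eps_le Hin erefl HG2Xs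
    (Forall_nil _) (c := 0)).
  move=> y X O nZG2; case: nZG2; apply/boxes_set_app.
  case/boxes_set_app: (Hcov_in y X O) => [Yty|G2y]; [left|by right].
  by apply/boxes_set_app; left.
Qed.

Lemma outer_correct K Yt Y G1 G2 Kf : outer F eps sel K Yt Y G1 G2 Kf ->
  outer_inv K Yt Y G1 G2 ->
  layered Xs Om F Kf /\ pset_sub (Win f Xs Om delta) (interval_part Kf).
Proof.
elim=> {K Yt Y G1 G2 Kf} [K Yt Y G1 G2 Heq|K Yt Y G1 G2 Kz Zl DZ Zc Xf Kv G2' Kf _ HC Hin _ IH]
  Hinv.
- by split; [exact: outer_layered Hinv | exact: outer_inv_stop Hinv Heq].
- exact: IH (outer_inv_step Hinv HC Hin).
Qed.

End OuterLoop.


Section LoopTermination.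
Context {n : nat} {U : finType} (F : U -> box n -> box n) (eps : R) (sel : box n -> nat).
Hypothesis sel_max : sel_ok sel.
Hypothesis eps_gt0 : 0 < eps.
Variable D : list (box n).
Hypothesis D_closed : bisect_closed sel eps (fun b => In b D).

Definition in_universe (b : box n) : Prop := valid_box b /\ In b D.

Lemma in_universe_valid b : in_universe b -> valid_box b.
Proof. by case. Qed.

Lemma bisect_closed_in_universe : bisect_closed sel eps in_universe.
Proof.
move=> b [V Db] W; have [D1 D2] := D_closed Db W.
by split; split=> //; [apply: valid_bisect1 | apply: valid_bisect2].
Qed.

Lemma CPred_exists Xin Y : Forall in_universe Xin ->
  exists K Xl DX Xc, CPred F eps sel Xin Y K Xl DX Xc.
Proof. by move=> HXin; apply: cpred_total => //; apply: Forall_impl HXin => b []. Qed.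

Lemma inner_terminates Z X V G2 Kv : Forall in_universe V ->
  exists Xf Kvf G2f, inner F eps sel Z X (Z ++ V) V G2 Kv Xf Kvf G2f.
Proof.
move Es : (count_sat (fun d => box_sub d (boxes_set (Z ++ V))) D) => s.
elim/ltn_ind: s X V G2 Kv Es => s IH X V G2 Kv Es HV.
have [Heq|Hne] := classic (seteq (boxes_set (Z ++ V)) (boxes_set X)).
  by exists X, Kv, G2; apply: inner_stop.
have [Kv' [Vl [DV [Vc HC]]]] := CPred_exists (Z ++ V) HV.
suff [Xf [Kvf [G2f Hin]]] :
    exists Xf Kvf G2f, inner F eps sel Z (Z ++ V) (Z ++ Vl) Vl (G2 ++ DV ++ Vc) Kv' Xf Kvf G2f.
  by exists Xf, Kvf, G2f; apply: inner_step Hne HC Hin.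
have [Heq'|Hne'] := classic (seteq (boxes_set (Z ++ Vl)) (boxes_set (Z ++ V))).
  by exists (Z ++ V), Kv', (G2 ++ DV ++ Vc); apply: inner_stop.
have HP : bisect_closed sel eps (fun b => in_universe b /\ inside (boxes_set V) b).
  by apply: bisect_closed_and; [apply: bisect_closed_in_universe | apply: bisect_closed_inside].
have [[_ HVl _] Hcov] := CPred_sound HC HP (Forall_inside_self (@in_universe_valid) HV).
have ZVl_sub : pset_sub (boxes_set (Z ++ Vl)) (boxes_set (Z ++ V)).
  move=> x /boxes_set_app[Zx|[b [Hb Hx]]]; apply/boxes_set_app; [by left|right].
  by have [[_ [_ Sb]] _] := (Forall_forall _ _).1 HVl b Hb; apply: Sb.
have [x [ZVx nZVlx]] := not_seteq_witness ZVl_sub Hne'.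
have [b [Hb Hxb]] : exists b, In b V /\ in_box b x.
  case/boxes_set_app: ZVx => [Zx|[b Hb]]; last by exists b.
  by case: nZVlx; apply/boxes_set_app; left.
have [_ Db] := (Forall_forall _ _).1 HV b Hb.
apply: IH erefl _; last by apply: Forall_impl HVl => c [[]].
rewrite -Es; apply: count_sat_lt Db _ _ => [d Hd y /Hd /ZVl_sub //| |].
- by move=> y Hy; apply/boxes_set_app; right; exists b.
- by move=> Hsub; apply: nZVlx; apply: Hsub.
Qed.

Lemma outer_terminates K Yt Y G1 G2 : Forall in_universe G1 -> Forall in_universe G2 ->
  Forall (fun b => In b D) Yt -> exists Kf, outer F eps sel K Yt Y G1 G2 Kf.
Proof.
move Es : (count_sat (fun d => ~ box_sub d (boxes_set Yt)) D) => s.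
elim/ltn_ind: s K Yt Y G1 G2 Es => s IH K Yt Y G1 G2 Es HG1 HG2 HYt.
have [Heq|Hne] := classic (seteq (boxes_set Yt) Y); first by exists K; apply: outer_stop.
have [Kz [Zl [DZ [Zc HC]]]] := CPred_exists Yt HG1.
have [[_ HZl Hbad] _] := CPred_sound HC bisect_closed_in_universe HG1.
have [Xf [Kv [G2' Hin]]] := inner_terminates (Yt ++ Zl) nil nil nil HG2.
have [ZXf _ HG2' _ HXf] := inner_structure bisect_closed_in_universe in_universe_valid Hin erefl
  HG2 (Forall_nil _) (Forall_nil _).
suff [Kf HKf] : exists Kf, outer F eps sel ((K ++ Kz) ++ Kv) Xf (boxes_set Yt) (DZ ++ Zc) G2' Kf.
  by exists Kf; apply: outer_step Hne HC Hin HKf.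
have [Heq'|Hne'] := classic (seteq (boxes_set Xf) (boxes_set Yt)).
  by exists ((K ++ Kz) ++ Kv); apply: outer_stop.
have YtXf : pset_sub (boxes_set Yt) (boxes_set Xf).
  by move=> x Ytx; apply: ZXf; apply/boxes_set_app; left.
have [x [[b [Hb Hxb]] nYtx]] := not_seteq_witness YtXf (fun h => Hne' (fun y => iff_sym (h y))).
have HXfD : Forall (fun b => In b D) Xf.
  apply: Forall_impl HXf => c [/in_app_iff[Hc|Hc]|[]//].
  - exact: (Forall_forall _ _).1 HYt c Hc.
  - by have [[_ Dc] _] := (Forall_forall _ _).1 HZl c Hc.
have Hlt : (count_sat (fun d => ~ box_sub d (boxes_set Xf)) D < s)%N.
  rewrite -Es; apply: (count_sat_lt _ ((Forall_forall _ _).1 HXfD b Hb)).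
  - by move=> d nXf dYt; apply: nXf => y /dYt /YtXf.
  - by move=> bYt; apply: nYtx; apply: bYt.
  - by case; apply: box_sub_boxes_set.
apply: (IH _ Hlt _ _ _ _ _ erefl _ HG2' HXfD).
by apply: Forall_impl Hbad => c [].
Qed.
End LoopTermination.


Theorem theorem1 (n : nat) (U : finType) (f : U -> pt n -> pt n)
    (X Om : pset n) (G1 G2 : list (box n)) (F : U -> box n -> box n)
    (rho delta eps : R) (sel : box n -> nat) :
  (forall u, continuous_map (f u)) ->
  pset_sub Om X ->
  (forall b, List.In b G1 -> valid_box b) ->
  (forall b, List.In b G2 -> valid_box b) ->
  (* G1 represents X \ Omega, G2 represents X /\ Omega, G1 u G2 = X *)
  seteq (boxes_set G2) (fun x => X x /\ Om x) ->
  pset_sub (fun x => X x /\ ~ Om x) (boxes_set G1) ->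
  pset_sub (boxes_set G1) X ->
  0 <= delta ->
  (exists x, Win f X Om delta x) ->
  0 < rho ->
  (forall u, inclusion_function (f u) (F u)) ->
  (forall u b, valid_box b -> box_sub b X -> wid (F u b) <= rho * wid b) ->
  sel_ok sel ->
  0 < eps ->
  (exists K, algorithm3 F eps sel X G1 G2 K) /\
  (rho * eps <= delta ->
   forall K, algorithm3 F eps sel X G1 G2 K ->
     pset_sub (Win f X Om delta) (interval_part K) /\
     pset_sub (interval_part K) (Win f X Om 0)).
Proof.
move=> _ _ G1_valid G2_valid G2_eq G1_cover G1_sub delta_ge0 _ rho_gt0 F_incl F_wid sel_max eps_gt0.
split.
- have [|D [D_closed GD]] := finite_bisect_closure sel_max eps_gt0 (L := G1 ++ G2).
    by apply/Forall_forall => b /in_app_iff[/G1_valid|/G2_valid].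
  have univ L : incl L (G1 ++ G2) -> Forall (in_universe D) L.
    move=> LG; apply/Forall_forall => b /LG Hb; split; last exact: GD.
    by case/in_app_iff: Hb => [/G1_valid|/G2_valid].
  have [K HK] := outer_terminates F sel_max eps_gt0 D_closed nil X
    (univ G1 (incl_appl _ (incl_refl _))) (univ G2 (incl_appr _ (incl_refl _))) (Forall_nil _).
  by exists K.
- move=> rho_eps_le K HK.
  have Hinv := outer_inv_init f F delta eps (Forall_inside G1_valid G1_sub)
    (Forall_inside G2_valid (fun x => (G2_eq x).1))
    (fun x X nO => G1_cover x (conj X nO)) (fun x X O => (G2_eq x).2 (conj X O)).
  have [Hlay HWin] := outer_correct F_incl F_wid rho_gt0 delta_ge0 rho_eps_le HK Hinv.
  have [kap Hwin] := layered_winning F_incl Hlay.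
  by split=> //; apply: winning_region_Win0 Hwin.
Qed.
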